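(* Let $\lambda\in\mathbb{R}$ and let $\mu$ be a (nonzero, finite, positive) measure on $\mathbb{R}$ with support contained in $(-\infty,\lambda]$. Then $l\mapsto-\frac{1}{s_\mu(l)}$ is convex on $(\lambda,\infty)$, where $s_\mu(l)=\int\frac{1}{l-x}\mu(dx)$. If the support of $\mu$ is not a singleton, this map is strictly convex.
   Context: $s_\mu$ is the Stieltjes transform of $\mu$, defined for $l$ outside the support of $\mu$. *)

From HB Require Import structures.
From mathcomp Require Import all_boot all_order all_algebra.
From mathcomp Require Import all_classical all_reals all_analysis.
Set Implicit Arguments. Unset Strict Implicit. Unset Printing Implicit Defensive.
Import Order.TTheory GRing.Theory Num.Theory.
Import numFieldNormedType.Exports.
Local Open Scope classical_set_scope.
Local Open Scope ring_scope.

Definition msupport (R : realType) (mu : {measure set R -> \bar R}) : set R :=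
  [set x | forall e : R, 0 < e -> (0 < mu (ball x e))%E].

Definition stieltjes (R : realType) (mu : {measure set R -> \bar R}) (l : R) : R :=
  Rintegral mu setT (fun x => (l - x)^-1).

Definition convex_on (R : realType) (I : set R) (f : R -> R) : Prop :=
  forall x y t, I x -> I y -> 0 <= t <= 1 ->
    f (t * x + (1 - t) * y) <= t * f x + (1 - t) * f y.

Definition strictly_convex_on (R : realType) (I : set R) (f : R -> R) : Prop :=
  forall x y t, I x -> I y -> x != y -> 0 < t < 1 ->
    f (t * x + (1 - t) * y) < t * f x + (1 - t) * f y.

From HB Require Import structures.
From mathcomp Require Import all_boot all_order all_algebra.
From mathcomp Require Import all_classical all_reals all_analysis.
From mathcomp Require Import measurable_realfun.
From mathcomp Require Import lra ring.

Set Implicit Arguments.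
Unset Strict Implicit.
Unset Printing Implicit Defensive.
Import Order.TTheory GRing.Theory Num.Theory.
Import numFieldNormedType.Exports.
Local Open Scope classical_set_scope.
Local Open Scope ring_scope.

(* Write S for the Stieltjes transform, F := -1/S and Q(w) := \int (w - x)^-2.
   Since mu puts no mass on ]lam, +oo[ (each segment there is covered by
   finitely many null balls), all integrals live on ]-oo, lam], where the
   integrands are bounded.  For lam < l, w the identity
     S(w)^2 (F(l) - F(w) + (l - w) Q(w) / S(w)^2)
       = \int (l - x)^-1 (S(w) / S(l) - (l - x) / (w - x))^2 dmu(x)
   shows that F lies above its tangent line at w, whose slope is
   -Q(w) / S(w)^2, and a function lying above all its tangents is convex.
   When l <> w the square vanishes for at most one x, so the inequality is
   strict unless mu is carried by a single point. *)

Section Rintegral_facts.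
Context d (T : measurableType d) (R : realType).
Variable mu : {measure set T -> \bar R}.

Lemma Rintegral_gt0 (D A : set T) (h : T -> R) : measurable D -> measurable A ->
  mu.-integrable D (EFin \o h) -> (forall x, D x -> 0 <= h x) ->
  (forall x, D x -> ~ A x -> 0 < h x) -> (0 < mu (D `\` A))%E ->
  0 < \int[mu]_(x in D) h x.
Proof.
move=> mD mA ih h0 hpos muDA; rewrite lt_def Rintegral_ge0 // andbT.
apply/eqP => int0.
have abs0 : (\int[mu]_(x in D) `|(EFin \o h) x| = 0)%E.
  rewrite -[RHS]/((0 : R)%:E) -int0 fineK; last exact: integrable_fin_num.
  by apply: eq_integral => x /set_mem Dx; rewrite gee0_abs // lee_fin h0.
have [N [mN N0 DhN]] :=
  (ae_eq_integral_abs mu mD (measurable_int mu ih)).1 abs0.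
suff : (mu (D `\` A) <= mu N)%E by rewrite N0 leNgt muDA.
apply: le_measure; rewrite ?inE //; first exact: measurableD.
move=> x [Dx nAx]; apply: DhN => /(_ Dx) /= [hx0].
by move: (hpos x Dx nAx); rewrite hx0 ltxx.
Qed.

Lemma Rintegral_setT_conull (D : set T) (f : T -> R) : measurable D ->
  measurable_fun setT f -> mu (~` D) = 0%E ->
  \int[mu]_x f x = \int[mu]_(x in D) f x.
Proof.
move=> mD mf DC0; rewrite [RHS]Rintegral_mkcond; congr fine.
apply: ae_eq_integral => //.
- exact/measurable_EFinP.
- apply/measurable_EFinP/(measurable_restrictT _ mD).
  exact: measurable_funS mf.
- exists (~` D); split => //; first exact: measurableC.
  by move=> x /= neq Dx; apply: neq => _; rewrite patchE mem_set.
Qed.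

Lemma integrable_EFinD (D : set T) (f g : T -> R) : measurable D ->
  mu.-integrable D (EFin \o f) -> mu.-integrable D (EFin \o g) ->
  mu.-integrable D (EFin \o (f \+ g)).
Proof.
by move=> mD fi gi; exact: eq_integrable mD _ _ _ (integrableD mD fi gi).
Qed.

End Rintegral_facts.

Section msupport_facts.
Context (R : realType) (mu : {measure set R -> \bar R}).

Lemma negligible_compact_notin_msupport (K : set R) :
  compact K -> K `<=` ~` msupport mu -> mu.-negligible K.
Proof.
rewrite compact_cover => cK Ksupp.
pose null_balls := [set p : R * R | 0 < p.2 /\ mu (ball p.1 p.2) = 0%E].
have [|x Kx|F Fnull KF] := cK _ null_balls (fun p => ball p.1 p.2).
- by move=> p [p0 _]; exact: ball_open.
- have /existsNP[e /not_implyP[e0 /negP]] := Ksupp x Kx.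
  rewrite lt0e measure_ge0 andbT negbK => /eqP mue.
  by exists (x, e) => //; exact: ballxx.
- apply: (negligibleS KF); rewrite /cover bigcup_fset big_seq.
  apply: big_ind => [|A B|p /Fnull/set_mem[_ mup]].
  + exact: negligible_set0.
  + exact: negligibleU.
  by apply/negligibleP => //; exact: measurable_ball.
Qed.

Lemma measure_itvoy_eq0_msupport (lam : R) :
  msupport mu `<=` `]-oo, lam] -> mu `]lam, +oo[%classic = 0%E.
Proof.
move=> supp; apply/negligibleP; first exact: measurable_itv.
pose K n := `[lam + n.+1%:R^-1, lam + n.+1%:R]%classic.
apply: (negligibleS (A := \bigcup_n K n)); last first.
  apply: negligible_bigcup => n; apply: negligible_compact_notin_msupport.
    exact: segment_compact.
  move=> x; rewrite /K /= in_itv /= => /andP[lx _] /supp.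
  rewrite /= in_itv /= leNgt => /negP; apply.
  by rewrite (lt_le_trans _ lx) // ltrDl invr_gt0.
move=> x /=; rewrite in_itv /= andbT => lx.
have dx0 : 0 < x - lam by rewrite subr_gt0.
exists (Num.truncn ((x - lam)^-1 + (x - lam))) => //=; rewrite /K /= in_itv /=.
have := truncnS_gt ((x - lam)^-1 + (x - lam)); set N := _.+1%:R => hN.
apply/andP; split.
  rewrite -lerBrDl -(invrK (x - lam)) lef_pV2 ?posrE ?invr_gt0 ?ltr0Sn //.
  by apply/ltW/(le_lt_trans _ hN); rewrite lerDl ltW.
by rewrite -lerBlDl; apply/ltW/(le_lt_trans _ hN); rewrite lerDr invr_ge0 ltW.
Qed.

Lemma msupport_eq_set1 (a : R) :
  mu setT != 0%E -> mu (~` [set a]) = 0%E -> msupport mu = [set a].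
Proof.
move=> mu0 out0; apply/seteqP; split => [x xsupp|_ -> e e0] /=.
- apply: contrapT => /eqP xa.
  have := xsupp `|x - a|; rewrite normr_gt0 subr_eq0 => /(_ xa).
  rewrite lt_neqAle measure_ge0 andbT => /negP; apply.
  rewrite eq_sym -measure_le0 -out0.
  apply: le_measure; rewrite ?inE //; first exact: measurable_ball.
    by apply: measurableC; exact: measurable_set1.
  by move=> y; rewrite -ball_normE /= => + ya; rewrite ya ltxx.
- have mB : measurable (ball a e) by exact: measurable_ball.
  rewrite lt0e measure_ge0 andbT; apply: contraNneq mu0 => mub0.
  rewrite -measure_le0 -(setUCr (ball a e)) -(adde0 0%E) -{1}mub0 -out0.
  apply: le_trans (measureU2 _ _ _) _ => //; first exact: measurableC.
  apply: leeD => //; apply: le_measure; rewrite ?inE //.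
    exact: measurableC.
    by apply: measurableC; exact: measurable_set1.
  by move=> y nby ya; apply: nby; rewrite ya; exact: ballxx.
Qed.

Lemma measure_setC1_gt0 (a : R) : mu setT != 0%E ->
  ~ (exists b, msupport mu = [set b]) -> (0 < mu (~` [set a]))%E.
Proof.
move=> mu0 nsingle; rewrite lt0e measure_ge0 andbT; apply/eqP => out0.
by apply: nsingle; exists a; exact: msupport_eq_set1.
Qed.

End msupport_facts.

Lemma measurable_inv (R : realType) : measurable_fun [set: R] (@GRing.inv R).
Proof.
have -> : [set: R] = [set x | x != 0] `|` [set 0].
  by apply/seteqP; split=> x // _; case: (eqVneq x 0) => ?; [right|left].
apply/measurable_funU; [apply: open_measurable; exact: open_neq|by []|split].
  apply: open_continuous_measurable_fun; first exact: open_neq.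
  by move=> x /set_mem x0; exact: inv_continuous.
move=> _ B _; have [B0|B0] := pselect (B (0 : R)^-1).
  rewrite (_ : _ `&` _ = [set 0]) //.
  by apply/seteqP; split=> x /=; [case|move=> ->].
by rewrite (_ : _ `&` _ = set0) //; apply/seteqP; split=> x //= [->].
Qed.

Lemma measurable_inv_subr (R : realType) (c : R) :
  measurable_fun [set: R] (fun x => (c - x)^-1).
Proof.
apply: measurableT_comp; first exact: measurable_inv.
by apply: measurable_funB => //; exact: measurable_cst.
Qed.

Lemma integrable_inv_subrX (R : realType)
    (mu : {finite_measure set R -> \bar R}) (lam c : R) (n : nat) : lam < c ->
  mu.-integrable `]-oo, lam] (EFin \o (fun x => (c - x)^-1 ^+ n)).
Proof.
move=> lc; apply: measurable_bounded_integrable.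
- exact: measurable_itv.
- by rewrite ltey_eq fin_num_measure.
- by apply/measurable_funX/(measurable_funS measurableT) => //;
    exact: measurable_inv_subr.
rewrite /bounded_near; near=> M => x /=; rewrite in_itv /= => xl.
have cx0 : 0 < c - x by rewrite subr_gt0 (le_lt_trans xl).
apply: le_trans (_ : (c - lam)^-1 ^+ n <= M); last first.
  by near: M; exact: nbhs_pinfty_ge (num_real _).
rewrite normrX ger0_norm; last by rewrite invr_ge0 ltW.
apply: lerXn2r; rewrite ?nnegrE ?invr_ge0 ?(ltW cx0) ?subr_ge0 ?(ltW lc) //.
by rewrite lef_pV2 ?posrE ?subr_gt0 ?(le_lt_trans xl lc) //; exact: lerB.
Unshelve. all: end_near.
Qed.

Section convexity_from_tangents.
Context (R : realType) (lam : R) (F g : R -> R).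

Let convex_comb_gt (x y t : R) : lam < x -> lam < y -> 0 <= t <= 1 ->
  lam < t * x + (1 - t) * y.
Proof.
move=> lx ly /andP[t0 t1]; set m := Num.min x y.
have lm : lam < m by rewrite lt_min lx ly.
have /(mulr_ge0 t0) xm : 0 <= x - m by rewrite subr_ge0 ge_min lexx.
have t1' : 0 <= 1 - t by rewrite subr_ge0.
have /(mulr_ge0 t1') ym : 0 <= y - m by rewrite subr_ge0 ge_min lexx orbT.
nra.
Qed.

Let convex_gap_decomp (x y t : R) (z := t * x + (1 - t) * y) :
  t * F x + (1 - t) * F y - F z =
  t * (F x - (F z + (x - z) * g z)) + (1 - t) * (F y - (F z + (y - z) * g z)).
Proof. by rewrite /z; ring. Qed.

Lemma convex_on_tangents :
  (forall l w, lam < l -> lam < w -> F w + (l - w) * g w <= F l) ->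
  convex_on `]lam, +oo[ F.
Proof.
move=> tangent x y t; rewrite /= !in_itv /= !andbT => lx ly t01.
have lz := convex_comb_gt lx ly t01; case/andP: t01 => t0 t1.
rewrite -subr_ge0 convex_gap_decomp.
by apply: addr_ge0; apply: mulr_ge0; rewrite ?subr_ge0 ?tangent.
Qed.

Lemma strictly_convex_on_tangents :
  (forall l w, lam < l -> lam < w -> l != w -> F w + (l - w) * g w < F l) ->
  strictly_convex_on `]lam, +oo[ F.
Proof.
move=> tangent x y t; rewrite /= !in_itv /= !andbT => lx ly xy /andP[t0 t1].
have lz : lam < t * x + (1 - t) * y by rewrite convex_comb_gt ?ltW.
have xy0 : x - y != 0 by rewrite subr_eq0.
have xz : x != t * x + (1 - t) * y.
  rewrite -subr_eq0 (_ : x - _ = (1 - t) * (x - y)); last by ring.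
  by apply: mulf_neq0; rewrite // subr_eq0 eq_sym lt_eqF.
have yz : y != t * x + (1 - t) * y.
  rewrite -subr_eq0 (_ : y - _ = - t * (x - y)); last by ring.
  by apply: mulf_neq0; rewrite // oppr_eq0 gt_eqF.
rewrite -subr_gt0 convex_gap_decomp.
by apply: addr_gt0; apply: mulr_gt0; rewrite ?subr_gt0 ?tangent.
Qed.

End convexity_from_tangents.

(* The integrand of the identity in the header, expanded; a stands for
   S(w) / S(l). *)
Definition tangent_gap (R : fieldType) (l w a x : R) :=
  a ^+ 2 * (l - x)^-1 + (1 - 2 * a) * (w - x)^-1 + (l - w) * (w - x)^-1 ^+ 2.

Lemma tangent_gap_sqr (R : fieldType) (l w a x : R) : l != x -> w != x ->
  tangent_gap l w a x = (l - x)^-1 * (a - (l - x) / (w - x)) ^+ 2.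
Proof.
by move=> lx wx; rewrite /tangent_gap; field; rewrite !subr_eq0 lx wx.
Qed.

Lemma subr_ratio_inj (R : fieldType) (l w x y : R) :
  l != w -> w != x -> w != y -> (l - x) / (w - x) = (l - y) / (w - y) -> x = y.
Proof.
move=> lw wx wy /eqP; rewrite eqr_div ?subr_eq0 // => /eqP exy.
have : (l - w) * (x - y) = (l - x) * (w - y) - (l - y) * (w - x) by ring.
rewrite exy subrr => /eqP; rewrite mulf_eq0 subr_eq0 (negbTE lw) subr_eq0 /=.
by move/eqP.
Qed.

Lemma subr_ratio_eq_at_most_once (R : fieldType) (l w a : R) : l != w ->
  exists u, forall x, w != x -> x != u -> a != (l - x) / (w - x).
Proof.
move=> lw.
have [[u wu ->]|none] := pselect (exists2 u, w != u & a = (l - u) / (w - u)).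
  by exists u => x wx; apply: contraNneq => /subr_ratio_inj ->.
by exists w => x wx _; apply/eqP => ax; apply: none; exists x.
Qed.

Section stieltjes_convexity.
Context (R : realType) (mu : {finite_measure set R -> \bar R}) (lam : R).
Hypothesis mu_itvoy0 : mu `]lam, +oo[%classic = 0%E.
Hypothesis mu_neq0 : mu setT != 0%E.

Let D := `]-oo, lam]%classic.
Let mD : measurable D. Proof. exact: measurable_itv. Qed.

Let measure_conull (A : set R) : measurable A -> mu A = mu (A `&` D).
Proof.
move=> mA; rewrite (measureDI mu mA mD) [X in (X + _)%E](_ : _ = 0%E) ?add0e //.
apply/eqP; rewrite -measure_le0 -mu_itvoy0 -setCitvl.
by apply: le_measure; rewrite ?inE //; [exact: measurableD|exact: measurableC].
Qed.

Let measure_D_gt0 : (0 < mu D)%E.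
Proof.
by rewrite -[D]setTI -measure_conull // lt0e mu_neq0 measure_ge0.
Qed.

Let measure_D_setC1_gt0 a : ~ (exists b, msupport mu = [set b]) ->
  (0 < mu (D `\` [set a]))%E.
Proof.
move=> nsingle; rewrite setDE setIC -measure_conull.
  exact: measure_setC1_gt0.
by apply: measurableC; exact: measurable_set1.
Qed.

Let S c := \int[mu]_(x in D) (c - x)^-1.
Let Q c := \int[mu]_(x in D) (c - x)^-1 ^+ 2.

Let stieltjesE c : stieltjes mu c = S c.
Proof.
apply: Rintegral_setT_conull => //; first exact: measurable_inv_subr.
by rewrite setCitvl.
Qed.

Let S_gt0 c : lam < c -> 0 < S c.
Proof.
move=> lc; apply: (Rintegral_gt0 (A := set0)) => //.
- exact: integrable_inv_subrX 1 lc.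
- by move=> x xl; rewrite invr_ge0 subr_ge0 ltW // (le_lt_trans _ lc).
- by move=> x xl _; rewrite invr_gt0 subr_gt0 (le_lt_trans _ lc).
- by rewrite setD0; exact: measure_D_gt0.
Qed.

Let integrable_scaled_inv_subrX k c n : lam < c ->
  mu.-integrable D (EFin \o (fun x => k * (c - x)^-1 ^+ n)).
Proof. by move=> lc; exact: integrableZl (integrable_inv_subrX mu n lc). Qed.

Let integrable_tangent_gap l w a : lam < l -> lam < w ->
  mu.-integrable D (EFin \o tangent_gap l w a).
Proof.
move=> ll lw; apply: integrable_EFinD => //.
  by apply: integrable_EFinD => //; exact: (integrable_scaled_inv_subrX _ 1).
exact: integrable_scaled_inv_subrX.
Qed.

Let integral_tangent_gap l w : lam < l -> lam < w ->
  \int[mu]_(x in D) tangent_gap l w (S w / S l) x =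
  S w + (l - w) * Q w - S w ^+ 2 / S l.
Proof.
move=> ll lw; have Sl0 : S l != 0 by rewrite gt_eqF // S_gt0.
have iSl := integrable_inv_subrX mu 1 ll.
have iSw := integrable_inv_subrX mu 1 lw.
have iQw := integrable_inv_subrX mu 2 lw.
rewrite /tangent_gap RintegralD //; last 2 first.
- by apply: integrable_EFinD => //; exact: (integrable_scaled_inv_subrX _ 1).
- exact: integrable_scaled_inv_subrX.
rewrite RintegralD //; try exact: (integrable_scaled_inv_subrX _ 1).
by rewrite !RintegralZl // -/(S l) -/(S w) -/(Q w); field.
Qed.

Let slope w := - (Q w / S w ^+ 2).

Let tangent_gapE l w : lam < l -> lam < w ->
  - (S l)^-1 - (- (S w)^-1 + (l - w) * slope w) =
  (\int[mu]_(x in D) tangent_gap l w (S w / S l) x) / S w ^+ 2.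
Proof.
move=> ll lw; have Sl0 : S l != 0 by rewrite gt_eqF // S_gt0.
have Sw0 : S w != 0 by rewrite gt_eqF // S_gt0.
by rewrite integral_tangent_gap // /slope; field; rewrite Sl0 Sw0.
Qed.

Let tangent_gap_ge0 l w a x : lam < l -> lam < w -> D x ->
  0 <= tangent_gap l w a x.
Proof.
move=> ll lw; rewrite /D /= in_itv /= => xl.
have lx : x < l := le_lt_trans xl ll.
rewrite tangent_gap_sqr ?gt_eqF ?(le_lt_trans xl) //.
by rewrite mulr_ge0 ?sqr_ge0 // invr_ge0 subr_ge0 ltW.
Qed.

Let tangent_gap_gt0 l w a x : lam < l -> lam < w -> D x ->
  a != (l - x) / (w - x) -> 0 < tangent_gap l w a x.
Proof.
move=> ll lw; rewrite /D /= in_itv /= => xl ax.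
have lx : x < l := le_lt_trans xl ll.
rewrite tangent_gap_sqr ?gt_eqF ?(le_lt_trans xl) //.
rewrite mulr_gt0 ?invr_gt0 ?subr_gt0 //.
by rewrite lt_def sqr_ge0 andbT sqrf_eq0 subr_eq0.
Qed.

Lemma stieltjes_convex : convex_on `]lam, +oo[ (fun l => - (stieltjes mu l)^-1).
Proof.
apply: (convex_on_tangents (g := slope)) => l w /[!stieltjesE] ll lw.
rewrite -subr_ge0 tangent_gapE // divr_ge0 ?sqr_ge0 //.
by apply: Rintegral_ge0 => x; exact: tangent_gap_ge0.
Qed.

Lemma stieltjes_strictly_convex : ~ (exists a : R, msupport mu = [set a]) ->
  strictly_convex_on `]lam, +oo[ (fun l => - (stieltjes mu l)^-1).
Proof.
move=> nsingle; apply: (strictly_convex_on_tangents (g := slope)).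
move=> l w /[!stieltjesE] ll lw lw'.
rewrite -subr_gt0 tangent_gapE // divr_gt0 ?exprn_gt0 ?S_gt0 //.
have [u0 a_neq] := subr_ratio_eq_at_most_once (S w / S l) lw'.
apply: (Rintegral_gt0 (A := [set u0])) => //.
- exact: integrable_tangent_gap.
- by move=> x Dx; exact: tangent_gap_ge0.
- move=> x Dx /eqP xu0; apply: tangent_gap_gt0 => //; apply: a_neq xu0.
  by rewrite gt_eqF // (le_lt_trans _ lw).
- exact: measure_D_setC1_gt0.
Qed.

End stieltjes_convexity.

Theorem lemma3p2 (R : realType) (lam : R) (mu : {finite_measure set R -> \bar R}) :
  (mu setT != 0)%E ->
  msupport mu `<=` `]-oo, lam] ->
  convex_on `]lam, +oo[ (fun l => - (stieltjes mu l)^-1) /\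
  (~ (exists a : R, msupport mu = [set a]) ->
   strictly_convex_on `]lam, +oo[ (fun l => - (stieltjes mu l)^-1)).
Proof.
move=> mu_neq0 /measure_itvoy_eq0_msupport mu_itvoy0.
split; first exact: stieltjes_convex.
exact: stieltjes_strictly_convex.
Qed.
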